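(* Let $X,Y$ be random variables on finite alphabets $\mathcal{X},\mathcal{Y}$ with $|\mathcal{X}|<|\mathcal{Y}|$ and joint pmf $P_{XY}$ whose marginals $P_X,P_Y$ have all entries positive, and suppose the $|\mathcal{X}|\times|\mathcal{Y}|$ matrix $P_{X|Y}$ has full row rank. Let $\epsilon\ge0$. Consider the problem of maximizing $I(U;Y)$ over all finite alphabets $\mathcal{U}$ and kernels $P_{U|Y}$, where the joint distribution is $P_{XYU}(x,y,u)=P_{XY}(x,y)P_{U|Y}(u|y)$ (so $X-Y-U$ is a Markov chain), subject to $\|P_{X|U=u}-P_X\|_1\le\epsilon$ for all $u\in\mathcal{U}$ (with $P_U(u)>0$). Then the supremum of this problem equals the supremum over those $U$ with $|\mathcal{U}|\le|\mathcal{Y}|$, and this supremum is achieved (so it is a maximum).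
   Context: $\|\cdot\|_1$ denotes the $\ell_1$ norm of a vector indexed by $\mathcal{X}$. The matrix $P_{X|Y}$ has entries $P_{X|Y}(x|y)$, rows indexed by $x$ and columns by $y$. *)

From HB Require Import structures.
From mathcomp Require Import all_boot all_order all_algebra.
From mathcomp Require Import reals exp.
Set Implicit Arguments. Unset Strict Implicit. Unset Printing Implicit Defensive.
Import Order.TTheory GRing.Theory Num.Theory.
Local Open Scope ring_scope.

Section Info.
Variables (R : realType) (X Y : finType).

Definition is_pmf2 (P : X -> Y -> R) : Prop :=
  (forall x y, 0 <= P x y) /\ \sum_(x : X) \sum_(y : Y) P x y = 1.

Definition margX (P : X -> Y -> R) (x : X) : R := \sum_(y : Y) P x y.
Definition margY (P : X -> Y -> R) (y : Y) : R := \sum_(x : X) P x y.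

Definition condXY (P : X -> Y -> R) (x : X) (y : Y) : R := P x y / margY P y.

Definition condXY_mx (P : X -> Y -> R) : 'M[R]_(#|X|, #|Y|) :=
  \matrix_(i, j) condXY P (enum_val i) (enum_val j).

Variable U : finType.

Definition is_kernel (K : Y -> U -> R) : Prop :=
  (forall y u, 0 <= K y u) /\ (forall y, \sum_(u : U) K y u = 1).

Definition jointUY (P : X -> Y -> R) (K : Y -> U -> R) (u : U) (y : Y) : R :=
  margY P y * K y u.

Definition margU (P : X -> Y -> R) (K : Y -> U -> R) (u : U) : R :=
  \sum_(y : Y) jointUY P K u y.

(* P_{X|U=u}(x) computed from P_{XYU}(x,y,u) = P_{XY}(x,y) P_{U|Y}(u|y) *)
Definition condXU (P : X -> Y -> R) (K : Y -> U -> R) (u : U) (x : X) : R :=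
  (\sum_(y : Y) P x y * K y u) / margU P K u.

(* I(U;Y) with the convention 0 log 0 = 0 (natural logarithm) *)
Definition mutinfoUY (P : X -> Y -> R) (K : Y -> U -> R) : R :=
  \sum_(u : U) \sum_(y : Y)
    (if jointUY P K u y == 0 then 0
     else jointUY P K u y * ln (jointUY P K u y / (margU P K u * margY P y))).

Definition privacy_ok (P : X -> Y -> R) (eps : R) (K : Y -> U -> R) : Prop :=
  forall u : U, 0 < margU P K u ->
    \sum_(x : X) `|condXU P K u x - margX P x| <= eps.

Definition feasible (P : X -> Y -> R) (eps : R) (K : Y -> U -> R) : Prop :=
  is_kernel K /\ privacy_ok P eps K.

End Info.

From HB Require Import structures.
From mathcomp Require Import all_boot all_order all_algebra.
From mathcomp Require Import reals exp.
From mathcomp Require Import boolp classical_sets topology normedtype derive.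
From mathcomp Require Import lra ring.
Import Order.TTheory GRing.Theory Num.Theory.
Import numFieldNormedType.Exports.
Local Open Scope ring_scope.

(* Both I(U;Y) and the privacy constraint split over the columns
   k_u = P_{U|Y}(u|.) of the kernel: I(U;Y) = sum_u F(k_u) with F positively
   homogeneous, and the constraint on a single column is invariant under
   positive scaling. Rescaling the columns by weights w >= 0 thus preserves the
   constraint, keeps the kernel property iff sum_u w_u k_u = 1, and changes the
   objective linearly in w. Moving along null combinations of the columns, as in
   the proof of Caratheodory's theorem, gives weights with at most |Y| nonzero
   columns and no smaller objective; these columns are then relabelled into an
   alphabet of size |Y|. Kernels Y -> Y satisfying the constraints form a
   compact set on which I(U;Y) is continuous, because t ln t extends
   continuously to t = 0, so a maximiser there dominates every feasible U. *)

Section xlnx.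
Context {R : realType}.

Definition xlnx (t : R) : R := t * ln t.

(* [ln] is [0] on nonpositive reals. *)
Lemma xlnx_le0 (t : R) : t <= 0 -> xlnx t = 0.
Proof. by move=> t_le0; rewrite /xlnx ln0 // mulr0. Qed.

Lemma norm_xlnx_le {t : R} : 0 < t -> t <= 1 -> `|xlnx t| <= 2 * Num.sqrt t.
Proof.
move=> t_gt0 t_le1; set s := Num.sqrt t.
have s_gt0 : 0 < s by rewrite sqrtr_gt0.
rewrite /xlnx ler0_norm; last by rewrite mulr_ge0_le0 ?ln_le0 // ltW.
have -> : t = s ^+ 2 by rewrite sqr_sqrtr // ltW.
rewrite lnXn //.
have lnV_lt : - ln s < s^-1 by rewrite -lnV ?posrE // ln_sublinear // invr_gt0.
have : s ^+ 2 * - ln s <= s ^+ 2 * s^-1 by rewrite ler_pM2l ?exprn_gt0 // ltW.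
rewrite [in X in _ <= X]expr2 mulfK ?gt_eqF // mulrN mulrnAr mulr2n.
move: (s ^+ 2 * ln s) => a; lra.
Qed.

Lemma continuous_xlnx : continuous xlnx.
Proof.
move=> x; have [x_gt0|x_lt0|->] := ltrgt0P x.
- by apply: continuousM => //; exact: continuous_ln.
- rewrite /continuous_at xlnx_le0 ?ltW //.
  apply: cvg_trans; first apply: (near_eq_cvg (f := fun=> 0)).
    by near=> t; rewrite xlnx_le0 //; near: t; exact: lt_le_nbhsl.
  exact: cvg_cst.
- apply/cvgrPdist_lt => e e_gt0.
  have e2_gt0 : 0 < (e / 2) ^+ 2 by rewrite exprn_gt0 // divr_gt0.
  near=> t.
  rewrite xlnx_le0 // sub0r normrN.
  have [t_le0|t_gt0] := leP t 0; first by rewrite xlnx_le0 // normr0.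
  have t_le1 : t <= 1 by near: t; apply: lt_le_nbhsl; exact: ltr01.
  have t_small : t < (e / 2) ^+ 2 by near: t; exact: lt_nbhsl.
  have : Num.sqrt t < Num.sqrt ((e / 2) ^+ 2) by rewrite ltr_sqrt.
  rewrite sqrtr_sqr ger0_norm ?divr_ge0 ?ltW //.
  have := norm_xlnx_le t_gt0 t_le1; lra.
Unshelve. all: by end_near.
Qed.

End xlnx.

Section ContinuityLemmas.
Context {R : realType} {T : topologicalType}.
Local Open Scope classical_set_scope.

Lemma continuous_sum (I : finType) (F : I -> T -> R) :
  (forall i, continuous (F i)) -> continuous (fun x => \sum_i F i x).
Proof.
move=> F_cont; apply: (@continuous_big _ _ +%R 0 xpredT); first exact: add_continuous.
by move=> i _; exact: F_cont.
Qed.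

Lemma continuous_cstM (a : R) (f : T -> R) : continuous f ->
  continuous (fun x => a * f x).
Proof. by move=> f_cont x; apply: continuousM; [exact: cst_continuous | exact: f_cont]. Qed.

Lemma continuous_sub (f g : T -> R) : continuous f -> continuous g ->
  continuous (fun x => f x - g x).
Proof. by move=> f_cont g_cont x; exact: (continuousB (f_cont x) (g_cont x)). Qed.

Lemma continuous_norm (f : T -> R) : continuous f -> continuous (fun x => `|f x|).
Proof.
move=> f_cont x; apply: (@continuous_comp _ _ _ f Num.norm); first exact: f_cont.
exact: norm_continuous.
Qed.

Lemma closed_le_fun (f g : T -> R) : continuous f -> continuous g ->
  closed [set x | f x <= g x].
Proof.
move=> f_cont g_cont.
rewrite (_ : [set x | _] = (fun x => g x - f x) @^-1` [set r | 0 <= r]).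
  apply: preimage_closed (@closed_ge _ 0) => x _.
  exact: continuous_sub.
by apply: funext => x; apply: propext; rewrite /= subr_ge0.
Qed.

Lemma closed_eq_fun (f : T -> R) (c : R) : continuous f -> closed [set x | f x = c].
Proof. by move=> f_cont; apply: preimage_closed (@closed_eq _ c) => x _; exact: f_cont. Qed.

Lemma closed_forall (I : Type) (Q : I -> T -> Prop) :
  (forall i, closed [set x | Q i x]) -> closed [set x | forall i, Q i x].
Proof.
move=> Q_closed; rewrite (_ : [set x | _] = \bigcap_(i in setT) [set x | Q i x]).
  by apply: closed_bigI => i _; exact: Q_closed.
by apply: funext => x; apply: propext; split=> [Qx i _|Qx i]; exact: Qx.
Qed.

End ContinuityLemmas.

Definition colsupp {R : nmodType} {Y U : finType} (K : Y -> U -> R) : {set U} :=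
  [set u | [exists y, K y u != 0]].

Lemma in_colsupp {R : nmodType} {Y U : finType} (K : Y -> U -> R) u :
  (u \in colsupp K) = [exists y, K y u != 0].
Proof. by rewrite inE. Qed.

Lemma sum_colsupp {R : nmodType} {Y U : finType} (K : Y -> U -> R)
    (T : nmodType) (F : U -> T) :
  (forall u, u \notin colsupp K -> F u = 0) ->
  \sum_u F u = \sum_(s : {u in colsupp K}) F (val s).
Proof.
by move=> F0; rewrite -big_sub [RHS]big_mkcond; apply: eq_bigr => u _; case: ifPn => // /F0.
Qed.

Lemma null_combination {R : fieldType} {Y U : finType} (K : Y -> U -> R)
    (S : {set U}) :
  (#|Y| < #|S|)%N ->
  exists d : U -> R, [/\ forall u, u \notin S -> d u = 0, exists u, d u != 0
                       & forall y, \sum_u d u * K y u = 0].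
Proof.
move=> ltYS; pose elt := @enum_val U (mem S).
pose M : 'M[R]_(#|S|, #|Y|) := \matrix_(s, j) K (enum_val j) (elt s).
have kerM_neq0 : kermx M != 0.
  by rewrite -mxrank_eq0 mxrank_ker -lt0n subn_gt0 (leq_ltn_trans (rank_leq_col M)).
have [r /sub_kermxP rM r_neq0] := rowV0Pn kerM_neq0.
have [s rs_neq0] : exists s, r 0 s != 0.
  apply/existsP; apply: contraNT r_neq0 => /existsPn r0.
  by apply/eqP/rowP => s; rewrite mxE; apply/eqP/negPn/r0.
pose d u := \sum_(s | elt s == u) r 0 s.
have d_elt s' : d (elt s') = r 0 s'.
  by rewrite /d (big_pred1 s') // => s'' /=; apply/eqP/eqP => [/enum_val_inj|->].
exists d; split.
- move=> u uS; rewrite /d big1 // => s' /eqP su.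
  by move: uS; rewrite -su enum_valP.
- by exists (elt s); rewrite d_elt.
- move=> y; transitivity (\sum_s r 0 s * K y (elt s)).
    rewrite [RHS](partition_big elt predT) //=; apply: eq_bigr => u _.
    by rewrite /d mulr_suml; apply: eq_bigr => s' /eqP ->.
  transitivity ((r *m M) 0 (enum_rank y)); last by rewrite rM mxE.
  by rewrite mxE; apply: eq_bigr => s' _; rewrite mxE enum_rankK.
Qed.

Section SparseReweighting.
Context {R : realFieldType} {Y U : finType} (K : Y -> U -> R) (c : U -> R).
Hypothesis K_ge0 : forall y u, 0 <= K y u.

Definition reweighting (w : U -> R) :=
  (forall u, 0 <= w u) /\ (forall y, \sum_u w u * K y u = 1).

Let wsupport (w : U -> R) := colsupp (fun y u => w u * K y u).

Let value (w : U -> R) := \sum_u w u * c u.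

(* A nonzero null combination of nonnegative columns has a negative entry; its
   sign is chosen so that the objective does not decrease along it. *)
Lemma improving_null_direction (w : U -> R) :
  (#|Y| < #|wsupport w|)%N ->
  exists d : U -> R,
    [/\ forall u, u \notin wsupport w -> d u = 0,
        forall y, \sum_u d u * K y u = 0,
        0 <= value d & exists u, d u < 0].
Proof.
move=> ltYS.
have [d0 [d0S [u1 d0u1] d0K]] := null_combination K _ ltYS.
pose sg : R := if 0 <= value d0 then 1 else -1.
pose d u := sg * d0 u.
have sg_neq0 : sg != 0 by rewrite /sg; case: ifP; rewrite ?oppr_eq0 oner_eq0.
have dS u : u \notin wsupport w -> d u = 0 by move/d0S; rewrite /d => ->; rewrite mulr0.
have dK y : \sum_u d u * K y u = 0.
  by under eq_bigr do rewrite -mulrA; rewrite -mulr_sumr d0K mulr0.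
exists d; split => //.
  rewrite /value; under eq_bigr do rewrite -mulrA; rewrite -mulr_sumr /sg.
  by case: ifPn; rewrite ?mul1r // mulN1r oppr_ge0 -ltNge => /ltW.
apply/existsP; apply: contraT => /existsPn d_ge0.
have {}d_ge0 u : 0 <= d u by rewrite leNgt d_ge0.
have : u1 \in wsupport w by apply: contraR d0u1 => /d0S ->.
rewrite in_colsupp => /existsP[y].
rewrite mulf_eq0 negb_or => /andP[_ Ky_neq0].
have /(_ u1 isT)/eqP := psumr_eq0P (fun u _ => mulr_ge0 (d_ge0 u) (K_ge0 y u)) (dK y).
by rewrite mulf_eq0 (negbTE Ky_neq0) orbF mulf_eq0 (negbTE sg_neq0) (negbTE d0u1).
Qed.

Lemma wsupport_shrink (w : U -> R) :
  reweighting w -> (#|Y| < #|wsupport w|)%N ->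
  exists w', [/\ reweighting w', value w <= value w'
               & (#|wsupport w'| < #|wsupport w|)%N].
Proof.
move=> [w_ge0 wK] ltYS.
have [d [dS dK d_ge0 [u0 du0_lt0]]] := improving_null_direction w ltYS.
have [us dus_lt0 us_min] :=
  arg_minP (fun u => w u / - d u) (du0_lt0 : (fun u => d u < 0) u0).
(* Step along d until the first weight vanishes. *)
set t := w us / - d us in us_min.
have t_ge0 : 0 <= t by rewrite divr_ge0 // oppr_ge0 ltW.
pose w' u := w u + t * d u.
have w'_us : w' us = 0.
  by rewrite /w' /t invrN mulrN mulNr mulfVK ?lt_eqF // subrr.
exists w'; split.
- split=> [u|y].
    have [du_lt0|du_ge0] := ltP (d u) 0.
      have ndu_gt0 : 0 < - d u by rewrite oppr_gt0.
      by move: (us_min u du_lt0); rewrite /= ler_pdivlMr // mulrN /w'; lra.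
    exact: addr_ge0 (w_ge0 u) (mulr_ge0 t_ge0 du_ge0).
  under eq_bigr do rewrite mulrDl -mulrA.
  by rewrite big_split /= -mulr_sumr dK mulr0 addr0 wK.
- rewrite /value; under [X in _ <= X]eq_bigr do rewrite mulrDl -mulrA.
  by rewrite big_split /= -mulr_sumr lerDl mulr_ge0.
- have usS : us \in wsupport w by apply: contraLR dus_lt0 => /dS ->; rewrite ltxx.
  rewrite (cardsD1 us (wsupport w)) usS ltnS; apply: subset_leq_card.
  apply/fintype.subsetP => u; rewrite !inE => /existsP[y w'K].
  apply/andP; split; first by apply: contraNneq w'K => ->; rewrite w'_us mul0r.
  apply: contraR w'K => uS; rewrite /w' dS ?in_colsupp // mulr0 addr0.
  by move: uS; rewrite negb_exists => /forallP/(_ y)/negPn.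
Qed.

Lemma sparse_reweighting (w : U -> R) : reweighting w ->
  exists w', [/\ reweighting w', value w <= value w' & (#|wsupport w'| <= #|Y|)%N].
Proof.
move: {2}#|wsupport w| (leqnn #|wsupport w|) => n.
elim: n w => [|n IHn] w le_n ww; first by exists w; split; rewrite ?(leq_trans le_n).
have [leY|ltY] := leqP #|wsupport w| #|Y|; first by exists w.
have [w2 [ww2 le_w2 lt_w2]] := wsupport_shrink w ww ltY.
have [w3 [ww3 le_w3 le_Y]] := IHn w2 (leq_trans lt_w2 le_n) ww2.
by exists w3; split=> //; apply: le_trans le_w3.
Qed.

End SparseReweighting.

Lemma exists_injective (D V : finType) : (#|D| <= #|V|)%N ->
  exists f : D -> V, injective f.
Proof.
rewrite -ffact_gt0 -card_inj_ffuns => /card_gt0P[f].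
by rewrite inE => /injectiveP; exists f.
Qed.

Section MergeColumns.
Context {R : nmodType} {Y D V : finType} (k : D -> Y -> R) (f : D -> V).
Hypothesis f_inj : injective f.

Definition merge_cols (v : V) (y : Y) : R := \sum_(s | f s == v) k s y.

Lemma merge_cols_cases v :
  (exists2 s, f s = v & merge_cols v = k s) \/
  (merge_cols v = (fun=> 0) /\ forall s, f s != v).
Proof.
case: (pickP (fun s => f s == v)) => [s /eqP<- | no_s]; [left | right].
  exists s => //; apply: funext => y.
  by rewrite /merge_cols (big_pred1 s) // => s'; exact: inj_eq.
by split=> [|s]; [apply: funext => y; rewrite /merge_cols big_pred0 | rewrite no_s].
Qed.

Lemma sum_merge_cols {T : nmodType} (H : (Y -> R) -> T) :
  H (fun=> 0) = 0 -> \sum_v H (merge_cols v) = \sum_s H (k s).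
Proof.
move=> H0; rewrite [RHS](partition_big f predT) //=; apply: eq_bigr => v _.
have [[s <- ->]|[-> no_s]] := merge_cols_cases v.
  by rewrite (big_pred1 s) // => s'; exact: inj_eq.
by rewrite big_pred0 // => s; apply/negbTE/no_s.
Qed.

End MergeColumns.

Section Columns.
Context {R : realType} {X Y : finType} (P : X -> Y -> R) (eps : R).

Definition info_col (k : Y -> R) : R :=
  \sum_y (if margY P y * k y == 0 then 0
          else margY P y * k y *
               ln (margY P y * k y / ((\sum_y' margY P y' * k y') * margY P y))).

Definition private_col (k : Y -> R) : Prop :=
  0 < \sum_y margY P y * k y ->
  \sum_x `|(\sum_y P x y * k y) / (\sum_y margY P y * k y) - margX P x| <= eps.

Lemma mutinfoUY_cols (U : finType) (K : Y -> U -> R) :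
  mutinfoUY P K = \sum_u info_col (fun y => K y u).
Proof. by []. Qed.

Lemma privacy_ok_cols (U : finType) (K : Y -> U -> R) :
  privacy_ok P eps K <-> forall u, private_col (fun y => K y u).
Proof. by []. Qed.

Lemma info_col0 : info_col (fun=> 0) = 0.
Proof. by rewrite /info_col big1 // => y _; rewrite mulr0 eqxx. Qed.

Lemma private_col0 : private_col (fun=> 0).
Proof. by rewrite /private_col big1 ?ltxx // => y _; rewrite mulr0. Qed.

Lemma sum_colZ (a : R) (F k : Y -> R) :
  \sum_y F y * (a * k y) = a * \sum_y F y * k y.
Proof. by rewrite mulr_sumr; apply: eq_bigr => y _; rewrite mulrCA. Qed.

Lemma info_colZ (a : R) (k : Y -> R) : 0 <= a ->
  info_col (fun y => a * k y) = a * info_col k.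
Proof.
rewrite le_eqVlt => /predU1P[<-|a_gt0].
  by rewrite mul0r /info_col big1 // => y _; rewrite mul0r mulr0 eqxx.
rewrite /info_col sum_colZ [RHS]mulr_sumr; apply: eq_bigr => y _.
rewrite mulrCA mulf_eq0 (gt_eqF a_gt0) /=; case: ifP => _; first by rewrite mulr0.
by rewrite -mulrA invfM mulrACA divff ?gt_eqF // mul1r [RHS]mulrA.
Qed.

Lemma private_colZ (a : R) (k : Y -> R) : 0 <= a -> private_col k ->
  private_col (fun y => a * k y).
Proof.
rewrite le_eqVlt => /predU1P[<-|a_gt0] k_priv.
  by rewrite /private_col big1 ?ltxx // => y _; rewrite mul0r mulr0.
rewrite /private_col !sum_colZ pmulr_rgt0 // => mass_gt0.
under eq_bigr do rewrite sum_colZ invfM mulrACA divff ?gt_eqF // mul1r.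
exact: k_priv.
Qed.

Lemma feasible_sparse {U : finType} (K : Y -> U -> R) : feasible P eps K ->
  exists K1 : Y -> U -> R,
    [/\ feasible P eps K1, mutinfoUY P K <= mutinfoUY P K1 & (#|colsupp K1| <= #|Y|)%N].
Proof.
move=> [[K_ge0 K_sum] K_priv].
pose c u := info_col (fun y => K y u).
have w1 : reweighting K (fun=> 1).
  by split=> // y; under eq_bigr do rewrite mul1r; exact: K_sum.
have [w [[w_ge0 wK] le_c supp_le]] := sparse_reweighting K c K_ge0 _ w1.
exists (fun y u => w u * K y u); split=> //; first split; first split.
- by move=> y u; rewrite mulr_ge0.
- exact: wK.
- by move=> u; apply: private_colZ; [exact: w_ge0 | exact: K_priv].
- rewrite !mutinfoUY_cols (eq_bigr (fun u => 1 * c u)) => [|u _]; last by rewrite mul1r.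
  by rewrite [X in _ <= X](eq_bigr (fun u => w u * c u)) // => u _; exact: info_colZ.
Qed.

Lemma feasible_relabel {U V : finType} (K : Y -> U -> R) :
  feasible P eps K -> (#|colsupp K| <= #|V|)%N ->
  exists K' : Y -> V -> R, feasible P eps K' /\ mutinfoUY P K' = mutinfoUY P K.
Proof.
move=> [[K_ge0 K_sum] K_priv] supp_le.
have [f f_inj] : exists f : {u in colsupp K} -> V, injective f.
  by apply: exists_injective; rewrite card_sig.
pose col (s : {u in colsupp K}) y := K y (val s).
have col0 u : u \notin colsupp K -> (fun y => K y u) = (fun=> 0).
  by rewrite in_colsupp negb_exists => /forallP K0; apply: funext => y; apply/eqP/negPn.
exists (fun y v => merge_cols col f v y); split; first split; first split.
- by move=> y v; apply: sumr_ge0 => s _; exact: K_ge0.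
- move=> y; rewrite (sum_merge_cols col f f_inj (fun k => k y)) //.
  by rewrite -(K_sum y) (sum_colsupp K) // => u /col0/(congr1 (@^~ y)).
- move=> v; change (private_col (merge_cols col f v)).
  have [[s _ ->]|[-> _]] := merge_cols_cases col f f_inj v.
    exact: K_priv.
  exact: private_col0.
- rewrite !mutinfoUY_cols (sum_merge_cols col f f_inj (info_col) info_col0).
  by rewrite [RHS](sum_colsupp K) // => u /col0 ->; exact: info_col0.
Qed.

Lemma feasible_reduce {U V : finType} (K : Y -> U -> R) :
  (#|Y| <= #|V|)%N -> feasible P eps K ->
  exists K' : Y -> V -> R, feasible P eps K' /\ mutinfoUY P K <= mutinfoUY P K'.
Proof.
move=> leYV K_feas; have [K1 [K1_feas le_K1 supp_le]] := feasible_sparse K K_feas.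
have [K' [K'_feas K'_info]] := feasible_relabel K1 K1_feas (leq_trans supp_le leYV).
by exists K'; rewrite K'_info.
Qed.

Lemma feasible_point_kernel {U : finType} (u0 : U) :
  0 <= eps -> \sum_y margY P y = 1 -> feasible P eps (fun y u => (u == u0)%:R).
Proof.
move=> eps_ge0 pY_sum; split; first split.
- by move=> y u; exact: ler0n.
- by move=> y; rewrite (bigD1 u0) //= eqxx big1 ?addr0 // => u /negbTE ->.
- apply/privacy_ok_cols => u; case: (u == u0); last first.
    by rewrite /private_col big1 ?ltxx // => y _; rewrite mulr0.
  move=> _; rewrite big1 // => x _; under eq_bigr do rewrite mulr1.
  by under [in X in _ / X]eq_bigr do rewrite mulr1; rewrite pY_sum divr1 subrr normr0.
Qed.

End Columns.

Section Compactness.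
Context {R : realType} {X Y : finType} (P : X -> Y -> R) (eps : R).
Hypothesis P_ge0 : forall x y, 0 <= P x y.
Hypothesis pY_gt0 : forall y, 0 < margY P y.
Local Open Scope classical_set_scope.

Definition xlnx_info_col (k : Y -> R) : R :=
  \sum_y xlnx (margY P y * k y) - xlnx (\sum_y margY P y * k y)
  - \sum_y xlnx (margY P y) * k y.

Lemma info_col_xlnx (k : Y -> R) : (forall y, 0 <= k y) ->
  info_col P k = xlnx_info_col k.
Proof.
move=> k_ge0; rewrite /info_col /xlnx_info_col; set m := \sum_y margY P y * k y.
have j_ge0 y : 0 <= margY P y * k y by rewrite mulr_ge0 // ltW.
have -> : xlnx m = \sum_y margY P y * k y * ln m by rewrite /xlnx /m mulr_suml.
rewrite -!sumrB; apply: eq_bigr => y _.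
case: ifPn => [|j_neq0].
  by rewrite mulf_eq0 gt_eqF //= => /eqP ->; rewrite /xlnx !(mulr0, mul0r, subr0).
have j_gt0 : 0 < margY P y * k y by rewrite lt_def j_neq0 j_ge0.
have m_gt0 : 0 < m.
  by apply: lt_le_trans j_gt0 _; rewrite /m (bigD1 y) //= lerDl sumr_ge0.
rewrite /xlnx ln_div ?posrE ?(mulr_gt0 m_gt0) // [ln (m * _)]lnM ?posrE ?pY_gt0 //.
by ring.
Qed.

Lemma private_colE (k : Y -> R) : (forall y, 0 <= k y) ->
  private_col P eps k <->
  \sum_x `|\sum_y P x y * k y - margX P x * \sum_y margY P y * k y|
     <= eps * \sum_y margY P y * k y.
Proof.
move=> k_ge0; rewrite /private_col; set m := \sum_y margY P y * k y.
have [m0|m_gt0] := eqVneq m 0; last first.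
  have {}m_gt0 : 0 < m by rewrite lt_def m_gt0 sumr_ge0 // => y _; rewrite mulr_ge0 // ltW.
  have scale x : `|\sum_y P x y * k y - margX P x * m| =
                 m * `|(\sum_y P x y * k y) / m - margX P x|.
    have -> : \sum_y P x y * k y - margX P x * m =
              m * ((\sum_y P x y * k y) / m - margX P x).
      by rewrite mulrBr mulrCA divff ?gt_eqF // mulr1 mulrC.
    by rewrite normrM ger0_norm // ltW.
  rewrite (eq_bigr _ (fun x _ => scale x)) -mulr_sumr mulrC ler_pM2r //.
  by split=> [|//]; apply.
rewrite m0 ltxx mulr0; split=> // _; rewrite big1 // => x _.
suff -> : \sum_y P x y * k y = 0 by rewrite mulr0 subrr normr0.
apply/eqP; rewrite eq_le sumr_ge0 ?andbT => [|y _]; last by rewrite mulr_ge0.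
rewrite -[X in _ <= X]m0 /m; apply: ler_sum => y _; apply: ler_wpM2r => //.
by rewrite /margY (bigD1 x) //= lerDl sumr_ge0.
Qed.

Local Notation N := #|{: Y * Y}|.

(* Kernels Y -> Y are encoded as row vectors indexed by Y * Y, the setting of
   the extreme value theorem EVT_max_rV. *)
Definition kernel_of_row (v : 'rV[R]_N) (y u : Y) : R := v ord0 (enum_rank (y, u)).

Definition row_of_kernel (K : Y -> Y -> R) : 'rV[R]_N :=
  \row_i K (enum_val i).1 (enum_val i).2.

Lemma row_of_kernelK K : kernel_of_row (row_of_kernel K) = K.
Proof. by apply: funext => y; apply: funext => u; rewrite /kernel_of_row mxE enum_rankK. Qed.

Lemma row_coordE (v : 'rV[R]_N) i :
  v ord0 i = kernel_of_row v (enum_val i).1 (enum_val i).2.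
Proof. by rewrite /kernel_of_row -surjective_pairing enum_valK. Qed.

Lemma continuous_col_comb (a : Y -> R) u :
  continuous (fun v => \sum_y a y * kernel_of_row v y u).
Proof. by apply: continuous_sum => y; apply: continuous_cstM; exact: coord_continuous. Qed.

Definition info_obj (v : 'rV[R]_N) : R :=
  \sum_u xlnx_info_col (fun y => kernel_of_row v y u).

Lemma continuous_info_obj : continuous info_obj.
Proof.
have xlnx_cont (f : 'rV[R]_N -> R) : continuous f -> continuous (xlnx \o f).
  by move=> f_cont v; apply: continuous_comp; [exact: f_cont | exact: continuous_xlnx].
apply: continuous_sum => u; apply: continuous_sub; first apply: continuous_sub.
- apply: continuous_sum => y; apply: xlnx_cont; apply: continuous_cstM.
  exact: coord_continuous.
- exact/xlnx_cont/continuous_col_comb.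
- exact: continuous_col_comb.
Qed.

Lemma mutinfoUY_kernel_of_row v : is_kernel (kernel_of_row v) ->
  mutinfoUY P (kernel_of_row v) = info_obj v.
Proof. by move=> [v_ge0 _]; apply: eq_bigr => u _; apply: info_col_xlnx. Qed.

Definition feasible_rows : set 'rV[R]_N := [set v | feasible P eps (kernel_of_row v)].

Lemma closed_feasible_rows : closed feasible_rows.
Proof.
pose mass a v u := \sum_y a y * kernel_of_row v y u.
rewrite (_ : feasible_rows =
  [set v | forall y u, 0 <= kernel_of_row v y u] `&`
  [set v | forall y, \sum_u kernel_of_row v y u = 1] `&`
  [set v | forall u, \sum_x `|mass (P x) v u - margX P x * mass (margY P) v u|
                      <= eps * mass (margY P) v u]).
  apply: closedI; first apply: closedI.
  - do 2![apply: closed_forall => ?]; apply: closed_le_fun; first exact: cst_continuous.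
    exact: coord_continuous.
  - apply: closed_forall => y; apply: closed_eq_fun; apply: continuous_sum => u.
    exact: coord_continuous.
  - apply: closed_forall => u; apply: closed_le_fun.
      apply: continuous_sum => x; apply: continuous_norm.
      by apply: continuous_sub; [|apply: continuous_cstM]; exact: continuous_col_comb.
    exact/continuous_cstM/continuous_col_comb.
apply: funext => v; apply: propext.
split=> [[[v_ge0 v_sum] v_priv]|[[v_ge0 v_sum] v_priv]].
  by split; [split | move=> u; apply/(private_colE _ (v_ge0^~ u)); exact: v_priv].
by split=> //; apply/privacy_ok_cols => u; apply/(private_colE _ (v_ge0^~ u)); exact: v_priv.
Qed.

Lemma compact_feasible_rows : compact feasible_rows.
Proof.
apply: (@subclosed_compact _ _ [set v : 'rV[R]_N | forall i, `[(0 : R), 1]%classic (v ord0 i)]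
  closed_feasible_rows).
  by apply: (@rV_compact _ _ (fun=> `[(0 : R), 1]%classic)) => i; exact: segment_compact.
move=> v [[v_ge0 v_sum] _] i /=; rewrite row_coordE in_itv /= v_ge0 /=.
by rewrite -(v_sum (enum_val i).1) (bigD1 (enum_val i).2) //= lerDl sumr_ge0.
Qed.

End Compactness.

Theorem proposition2 (R : realType) (X Y : finType) (P : X -> Y -> R) (eps : R) :
  (#|X| < #|Y|)%N ->
  is_pmf2 P ->
  (forall x, 0 < margX P x) ->
  (forall y, 0 < margY P y) ->
  \rank (condXY_mx P) = #|X| ->
  0 <= eps ->
  exists (U : finType) (K : Y -> U -> R),
    [/\ (#|U| <= #|Y|)%N, feasible P eps K &
      forall (U' : finType) (K' : Y -> U' -> R),
        feasible P eps K' -> mutinfoUY P K' <= mutinfoUY P K].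
Proof.
move=> ltXY [P_ge0 P_sum] _ pY_gt0 _ eps_ge0.
have /card_gt0P[y0 _] : (0 < #|Y|)%N by apply: leq_ltn_trans ltXY.
have pY_sum : \sum_y margY P y = 1 by rewrite /margY exchange_big.
have rows_neq0 : (feasible_rows P eps !=set0)%classic.
  exists (row_of_kernel (fun y u => (u == y0)%:R)).
  by rewrite /feasible_rows /= row_of_kernelK; exact: feasible_point_kernel.
have [v /set_mem v_feas v_max] := EVT_max_rV rows_neq0
  (compact_feasible_rows P eps P_ge0 pY_gt0) (continuous_subspaceT (continuous_info_obj P)).
exists Y, (kernel_of_row v); split=> // U K K_feas.
have [K' [K'_feas le_K']] := feasible_reduce P eps K (leqnn #|Y|) K_feas.
apply: le_trans le_K' _; rewrite -(row_of_kernelK K') !mutinfoUY_kernel_of_row //.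
- by apply: v_max; rewrite inE /feasible_rows /= row_of_kernelK.
- by case: v_feas.
- by rewrite row_of_kernelK; case: K'_feas.
Qed.
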